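(* Let $X=\{x\in\mathbb{R}^n: Cx\le d\}$ be polyhedral, $g:\mathbb{R}^m\to\mathbb{R}$ be $\sigma_g$-strongly convex with $L_g$-Lipschitz gradient, $A\in\mathbb{R}^{m\times n}$ nonzero, $c\in\mathbb{R}^n$, and $f(x)=g(Ax)+c^Tx$. Assume the optimal set $X^*$ of $f^*=\min_{x\in X}f(x)$ is nonempty. Then there exist unique $t^*\in\mathbb{R}^m$, $s^*\in\mathbb{R}$ with $Ax^*=t^*$, $c^Tx^*=s^*$ for all $x^*\in X^*$, and $X^*=\{x: Ax=t^*,\ c^Tx=s^*,\ Cx\le d\}$. Let $\theta>0$ be a Hoffman constant for this polyhedron: $$\|x-[x]_{X^*}\|\le\theta\left\|\begin{pmatrix}Ax-t^*\\ c^Tx-s^*\\ [Cx-d]_+\end{pmatrix}\right\|\qquad\forall x\in\mathbb{R}^n,$$ and let $c_g=\|\nabla g(t^* )\|$. Then $\nabla f$ is Lipschitz with constant $L_f=L_g\|A\|^2$, and for every $M>0$, with $X_M=\{x\in X: f(x)-f^*\le M\}$, $$f(x)-f^*\ge\frac{\kappa_f}{2}\|x-[x]_{X^*}\|^2\quad\forall x\in X_M,\qquad\kappa_f=\frac{\sigma_g}{\theta^2\,(1+M\sigma_g+2c_g^2)}.$$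
   Context: $\|\cdot\|$ denotes the Euclidean norm (spectral norm for matrices), $[u]_S$ the Euclidean projection onto a closed convex set $S$, and $[v]_+$ the componentwise positive part. $g$ is $\sigma_g$-strongly convex means $g(z)\ge g(w)+\langle\nabla g(w),z-w\rangle+\frac{\sigma_g}{2}\|z-w\|^2$ for all $z,w$, with $\sigma_g>0$. *)

From Stdlib Require Export Reals Lra.
From Stdlib Require Vectors.Fin.
Open Scope R_scope.

Definition vec (n : nat) := Fin.t n -> R.
Definition mat (m n : nat) := Fin.t m -> Fin.t n -> R.

Fixpoint vsum (n : nat) : (Fin.t n -> R) -> R :=
  match n with
  | O => fun _ => 0
  | S k => fun f => f Fin.F1 + vsum k (fun i => f (Fin.FS i))
  end.

Definition dot {n} (u v : vec n) : R := vsum n (fun i => u i * v i).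
Definition norm {n} (u : vec n) : R := sqrt (dot u u).
Definition vadd {n} (u v : vec n) : vec n := fun i => u i + v i.
Definition vsub {n} (u v : vec n) : vec n := fun i => u i - v i.
Definition vpos {n} (u : vec n) : vec n := fun i => Rmax (u i) 0.
Definition veq {n} (u v : vec n) : Prop := forall i, u i = v i.
Definition matvec {m n} (A : mat m n) (x : vec n) : vec m :=
  fun i => dot (A i) x.

Definition is_opnorm {m n} (A : mat m n) (nA : R) : Prop :=
  is_lub (fun r => exists x : vec n, norm x <= 1 /\ r = norm (matvec A x)) nA.

Definition is_grad {n} (h : vec n -> R) (G : vec n) (w : vec n) : Prop :=
  forall eps, 0 < eps -> exists delta, 0 < delta /\
    forall k : vec n, norm k < delta ->
      Rabs (h (vadd w k) - h w - dot G k) <= eps * norm k.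

Definition lipschitz {n} (G : vec n -> vec n) (L : R) : Prop :=
  forall z w, norm (vsub (G z) (G w)) <= L * norm (vsub z w).

Definition strongly_convex {n} (h : vec n -> R) (G : vec n -> vec n) (s : R) : Prop :=
  forall z w, h z >= h w + dot (G w) (vsub z w) + s / 2 * (norm (vsub z w))^2.

Definition in_poly {p n} (C : mat p n) (d : vec p) (x : vec n) : Prop :=
  forall i, matvec C x i <= d i.

Definition fobj {m n} (g : vec m -> R) (A : mat m n) (c : vec n) (x : vec n) : R :=
  g (matvec A x) + dot c x.

Definition is_optimal {p n} (C : mat p n) (d : vec p) (f : vec n -> R) (x : vec n) : Prop :=
  in_poly C d x /\ forall y, in_poly C d y -> f x <= f y.

Definition is_proj {n} (S : vec n -> Prop) (x q : vec n) : Prop :=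
  S q /\ forall y, S y -> norm (vsub x q) <= norm (vsub x y).

(** Fix an optimal [x0] and put [t0 = A x0], [s0 = c^T x0]. The first-order condition at
    [x0] reads [<∇g(t0), A y - t0> + (c^T y - s0) >= 0] on [X], so strong convexity of [g]
    gives [f(y) - f* >= σ_g/2 ||A y - t0||^2]; hence [A x = t0] on [X*], and then [c^T x = s0].
    On [X_M] the same two inequalities bound [||A y - t0||^2] and [(c^T y - s0)^2] by
    multiples of [f(y) - f*], and the Hoffman bound turns this into quadratic growth. *)

From Stdlib Require Import Reals Lra Lia FunctionalExtensionality.
Open Scope R_scope.

Definition scale {n} (a : R) (u : vec n) : vec n := fun i => a * u i.
Definition matT {m n} (A : mat m n) : mat n m := fun j i => A i j.

Definition convex_set {n} (S : vec n -> Prop) : Prop :=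
  forall x y l, S x -> S y -> 0 <= l <= 1 -> S (vadd x (scale l (vsub y x))).

Lemma vsum_ext n (f h : Fin.t n -> R) : (forall i, f i = h i) -> vsum n f = vsum n h.
Proof. intros; f_equal; apply functional_extensionality; auto. Qed.

Lemma vsum_lin n (f h : Fin.t n -> R) a b :
  vsum n (fun i => a * f i + b * h i) = a * vsum n f + b * vsum n h.
Proof.
  revert f h; induction n; intros; simpl; [ring|].
  rewrite (IHn (fun i => f (Fin.FS i)) (fun i => h (Fin.FS i))); ring.
Qed.

Lemma vsum_add n (f h : Fin.t n -> R) : vsum n (fun i => f i + h i) = vsum n f + vsum n h.
Proof.
  rewrite <- (Rmult_1_l (vsum n f)), <- (Rmult_1_l (vsum n h)), <- vsum_lin.
  apply vsum_ext; intros; ring.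
Qed.

Lemma vsum_scal n (f : Fin.t n -> R) a : vsum n (fun i => a * f i) = a * vsum n f.
Proof.
  replace (a * vsum n f) with (a * vsum n f + 0 * vsum n f) by ring.
  rewrite <- vsum_lin; apply vsum_ext; intros; ring.
Qed.

Lemma vsum_zero n : vsum n (fun _ => 0) = 0.
Proof. induction n; simpl; [reflexivity | rewrite IHn; ring]. Qed.

Lemma vsum_nonneg n (f : Fin.t n -> R) : (forall i, 0 <= f i) -> 0 <= vsum n f.
Proof.
  revert f; induction n; intros f Hf; simpl; [lra|].
  pose proof (Hf Fin.F1); pose proof (IHn _ (fun i => Hf (Fin.FS i))); lra.
Qed.

Lemma vsum_term n (f : Fin.t n -> R) : (forall i, 0 <= f i) -> forall i, f i <= vsum n f.
Proof.
  revert f; induction n; intros f Hf i; [inversion i|]; simpl.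
  pattern i; apply Fin.caseS'.
  - pose proof (vsum_nonneg n _ (fun i => Hf (Fin.FS i))); lra.
  - intro j. pose proof (Hf Fin.F1); pose proof (IHn _ (fun i => Hf (Fin.FS i)) j); lra.
Qed.

Lemma vsum_swap n m (F : Fin.t n -> Fin.t m -> R) :
  vsum n (fun i => vsum m (fun j => F i j)) = vsum m (fun j => vsum n (fun i => F i j)).
Proof.
  revert F; induction n; intros; simpl; [now rewrite vsum_zero|].
  rewrite (IHn (fun i j => F (Fin.FS i) j)), <- vsum_add; reflexivity.
Qed.

Lemma dot_comm {n} (u v : vec n) : dot u v = dot v u.
Proof. apply vsum_ext; intros; ring. Qed.

Lemma dot_vadd_r {n} (u v w : vec n) : dot u (vadd v w) = dot u v + dot u w.
Proof. unfold dot, vadd; rewrite <- vsum_add; apply vsum_ext; intros; ring. Qed.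

Lemma dot_scale_r {n} a (u v : vec n) : dot u (scale a v) = a * dot u v.
Proof. unfold dot, scale; rewrite <- vsum_scal; apply vsum_ext; intros; ring. Qed.

Lemma dot_vsub_r {n} (u v w : vec n) : dot u (vsub v w) = dot u v - dot u w.
Proof.
  replace (vsub v w) with (vadd v (scale (-1) w))
    by (apply functional_extensionality; intro; unfold vsub, vadd, scale; ring).
  rewrite dot_vadd_r, dot_scale_r; ring.
Qed.

Lemma dot_vadd_l {n} (u v w : vec n) : dot (vadd v w) u = dot v u + dot w u.
Proof. rewrite !(dot_comm _ u); apply dot_vadd_r. Qed.

Lemma dot_vsub_l {n} (u v w : vec n) : dot (vsub v w) u = dot v u - dot w u.
Proof. rewrite !(dot_comm _ u); apply dot_vsub_r. Qed.

Lemma dot_scale_l {n} a (u v : vec n) : dot (scale a v) u = a * dot v u.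
Proof. rewrite !(dot_comm _ u); apply dot_scale_r. Qed.

Lemma dot_self_nonneg {n} (u : vec n) : 0 <= dot u u.
Proof. apply vsum_nonneg; intros; nra. Qed.

Lemma sqr_coord_le_dot {n} (u : vec n) i : u i * u i <= dot u u.
Proof. apply (vsum_term n (fun i => u i * u i)); intros; nra. Qed.

Lemma norm_nonneg {n} (u : vec n) : 0 <= norm u.
Proof. apply sqrt_pos. Qed.

Lemma norm_sq {n} (u : vec n) : norm u ^ 2 = dot u u.
Proof. apply pow2_sqrt, dot_self_nonneg. Qed.

Lemma norm_eq0 {n} (u : vec n) : norm u = 0 -> forall i, u i = 0.
Proof.
  intros H i. pose proof (sqr_coord_le_dot u i).
  rewrite <- norm_sq, H in *; nra.
Qed.

Lemma norm_coord_pos {n} (u : vec n) i : u i <> 0 -> 0 < norm u.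
Proof.
  intro Hi. destruct (norm_nonneg u) as [|E]; auto.
  exfalso; exact (Hi (norm_eq0 u (eq_sym E) i)).
Qed.

Lemma norm_scale {n} a (u : vec n) : norm (scale a u) = Rabs a * norm u.
Proof.
  unfold norm; rewrite dot_scale_l, dot_scale_r, <- Rmult_assoc.
  rewrite sqrt_mult_alt by nra; f_equal.
  rewrite <- sqrt_Rsqr_abs; reflexivity.
Qed.

Lemma cauchy_schwarz_sq {n} (u v : vec n) : (dot u v) ^ 2 <= dot u u * dot v v.
Proof.
  assert (Q : forall l, 0 <= dot u u - 2 * l * dot u v + l ^ 2 * dot v v).
  { intro l. replace (dot u u - 2 * l * dot u v + l ^ 2 * dot v v)
      with (dot (vsub u (scale l v)) (vsub u (scale l v))) by
      (rewrite dot_vsub_l, !dot_vsub_r, !dot_scale_l, !dot_scale_r, (dot_comm v u); ring).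
    apply dot_self_nonneg. }
  pose proof (dot_self_nonneg u). pose proof (dot_self_nonneg v).
  destruct (Req_dec (dot v v) 0) as [E|E].
  - (* the quadratic in [l] degenerates to a line, which must be constant *)
    destruct (Req_dec (dot u v) 0) as [E2|E2]; [rewrite E2, E; nra|].
    specialize (Q ((dot u u + 1) / (2 * dot u v))). rewrite E in Q.
    replace (dot u u - 2 * ((dot u u + 1) / (2 * dot u v)) * dot u v
      + ((dot u u + 1) / (2 * dot u v)) ^ 2 * 0) with (-1) in Q by (field; auto).
    lra.
  - specialize (Q (dot u v / dot v v)).
    assert (0 <= dot u u * dot v v - (dot u v) ^ 2); [|lra].
    replace (dot u u * dot v v - (dot u v) ^ 2) with
      (dot v v * (dot u u - 2 * (dot u v / dot v v) * dot u v
                  + (dot u v / dot v v) ^ 2 * dot v v)) by (field; auto).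
    apply Rmult_le_pos; lra.
Qed.

Lemma cauchy_schwarz {n} (u v : vec n) : Rabs (dot u v) <= norm u * norm v.
Proof.
  unfold norm; rewrite <- sqrt_mult_alt by apply dot_self_nonneg.
  rewrite <- sqrt_Rsqr_abs; apply sqrt_le_1_alt.
  rewrite Rsqr_pow2; apply cauchy_schwarz_sq.
Qed.

Lemma matvec_vadd {m n} (A : mat m n) x y :
  matvec A (vadd x y) = vadd (matvec A x) (matvec A y).
Proof. apply functional_extensionality; intro; apply dot_vadd_r. Qed.

Lemma matvec_vsub {m n} (A : mat m n) x y :
  matvec A (vsub x y) = vsub (matvec A x) (matvec A y).
Proof. apply functional_extensionality; intro; apply dot_vsub_r. Qed.

Lemma matvec_scale {m n} (A : mat m n) a x : matvec A (scale a x) = scale a (matvec A x).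
Proof. apply functional_extensionality; intro; apply dot_scale_r. Qed.

Lemma dot_matT {m n} (A : mat m n) u k : dot (matvec (matT A) u) k = dot u (matvec A k).
Proof.
  unfold dot, matvec, matT, dot.
  transitivity (vsum n (fun j => vsum m (fun i => A i j * u i * k j))).
  - apply vsum_ext; intro j; rewrite Rmult_comm, <- vsum_scal; apply vsum_ext; intros; ring.
  - rewrite vsum_swap; apply vsum_ext; intro i.
    rewrite <- vsum_scal; apply vsum_ext; intros; ring.
Qed.

Section OperatorNorm.
Context {m n : nat} (A : mat m n) (nA : R) (HnA : is_opnorm A nA).

Lemma opnorm_nonneg : 0 <= nA.
Proof.
  set (z := scale 0 (fun _ : Fin.t n => 0)).
  apply (proj1 HnA); exists z; unfold z.
  rewrite matvec_scale, !norm_scale, Rabs_R0; split; [lra | ring].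
Qed.

Lemma opnorm_bound x : norm (matvec A x) <= nA * norm x.
Proof.
  pose proof opnorm_nonneg. pose proof (norm_nonneg x).
  apply Rle_plus_epsilon; intros eps Heps.
  (* test the unit ball at [x / (||x|| + δ)] and let [δ] go to 0 *)
  set (del := eps / (nA + 1)).
  assert (Hdel : 0 < del) by (apply Rdiv_lt_0_compat; lra).
  set (l := / (norm x + del)).
  assert (Hl : 0 < l) by (apply Rinv_0_lt_compat; lra).
  assert (Hb : l * norm (matvec A x) <= nA).
  { apply (proj1 HnA); exists (scale l x).
    rewrite matvec_scale, !norm_scale, Rabs_right by lra; split; [|reflexivity].
    unfold l; apply Rmult_le_reg_l with (norm x + del); [lra|].
    field_simplify; lra. }
  apply Rmult_le_compat_l with (r := norm x + del) in Hb; [|lra].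
  unfold l in Hb; rewrite <- Rmult_assoc, Rinv_r, Rmult_1_l in Hb by lra.
  assert (nA * del <= eps).
  { unfold del; apply Rmult_le_reg_r with (nA + 1); [lra|].
    field_simplify; lra. }
  nra.
Qed.

Lemma opnorm_bound_matT u : norm (matvec (matT A) u) <= nA * norm u.
Proof.
  set (r := norm (matvec (matT A) u)).
  assert (Hr2 : r ^ 2 <= norm u * (nA * r)).
  { unfold r; rewrite norm_sq, dot_matT.
    eapply Rle_trans; [apply Rle_abs|]. eapply Rle_trans; [apply cauchy_schwarz|].
    apply Rmult_le_compat_l; [apply norm_nonneg | apply opnorm_bound]. }
  assert (0 <= r) by apply norm_nonneg.
  pose proof (norm_nonneg u). pose proof opnorm_nonneg.
  destruct (Rle_or_lt r (nA * norm u)) as [|Hlt]; auto.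
  assert (nA * norm u * r < r * r) by (apply Rmult_lt_compat_r; nra). nra.
Qed.

End OperatorNorm.

Lemma lipschitz_nonneg {m} (G : vec m -> vec m) L (i : Fin.t m) : lipschitz G L -> 0 <= L.
Proof.
  intro HL. set (z := fun _ : Fin.t m => 1). set (w := fun _ : Fin.t m => 0).
  assert (Hzw : 0 < norm (vsub z w)) by (apply (norm_coord_pos _ i); unfold vsub, z, w; lra).
  pose proof (HL z w). pose proof (norm_nonneg (vsub (G z) (G w))).
  destruct (Rle_or_lt 0 L); auto. nra.
Qed.

Lemma in_poly_convex {p n} (C : mat p n) d : convex_set (in_poly C d).
Proof.
  intros x y l Hx Hy Hl i. rewrite matvec_vadd, matvec_scale, matvec_vsub.
  unfold vadd, scale, vsub. specialize (Hx i). specialize (Hy i). nra.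
Qed.

Lemma vpos_feasible {p n} (C : mat p n) d x :
  in_poly C d x -> norm (vpos (vsub (matvec C x) d)) = 0.
Proof.
  intro Hx. unfold norm, dot. rewrite <- sqrt_0. f_equal.
  rewrite <- (vsum_zero p). apply vsum_ext; intro i.
  unfold vpos, vsub. rewrite Rmax_right by (specialize (Hx i); lra). ring.
Qed.

Section Composite.
Context {m n : nat} (g : vec m -> R) (Gg : vec m -> vec m) (A : mat m n) (c : vec n).

Definition fgrad (x : vec n) : vec n := vadd (matvec (matT A) (Gg (matvec A x))) c.

Lemma is_grad_fobj nA x :
  is_opnorm A nA -> is_grad g (Gg (matvec A x)) (matvec A x) ->
  is_grad (fobj g A c) (fgrad x) x.
Proof.
  intros HnA Hg eps Heps. pose proof (opnorm_nonneg A nA HnA).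
  set (K := nA + 1). assert (HK : 0 < K) by (unfold K; lra).
  destruct (Hg (eps / K)) as [del [Hdel Hd]]; [apply Rdiv_lt_0_compat; lra|].
  exists (del / K); split; [apply Rdiv_lt_0_compat; lra|]; intros k Hk.
  assert (Hak : norm (matvec A k) <= K * norm k).
  { pose proof (opnorm_bound A nA HnA k). pose proof (norm_nonneg k). unfold K; nra. }
  assert (Hak2 : norm (matvec A k) < del).
  { apply Rle_lt_trans with (K * norm k); auto.
    apply Rmult_lt_compat_l with (r := K) in Hk; auto.
    replace (K * (del / K)) with del in Hk by (field; lra); exact Hk. }
  specialize (Hd _ Hak2).
  unfold fobj, fgrad; rewrite matvec_vadd, dot_vadd_l, dot_matT, !dot_vadd_r.
  replace (g (vadd (matvec A x) (matvec A k)) + (dot c x + dot c k) - (g (matvec A x) + dot c x)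
           - (dot (Gg (matvec A x)) (matvec A k) + dot c k))
    with (g (vadd (matvec A x) (matvec A k)) - g (matvec A x)
          - dot (Gg (matvec A x)) (matvec A k)) by ring.
  eapply Rle_trans; [exact Hd|].
  replace (eps * norm k) with (eps / K * (K * norm k)) by (field; lra).
  apply Rmult_le_compat_l; [apply Rlt_le, Rdiv_lt_0_compat|]; lra.
Qed.

Lemma lipschitz_fgrad nA L :
  is_opnorm A nA -> lipschitz Gg L -> 0 <= L -> lipschitz fgrad (L * nA ^ 2).
Proof.
  intros HnA HL HL0 z w.
  replace (vsub (fgrad z) (fgrad w))
    with (matvec (matT A) (vsub (Gg (matvec A z)) (Gg (matvec A w)))).
  2:{ rewrite matvec_vsub; apply functional_extensionality; intro.
      unfold fgrad, vsub, vadd; ring. }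
  pose proof (opnorm_nonneg A nA HnA).
  assert (HAzw := opnorm_bound A nA HnA (vsub z w)). rewrite matvec_vsub in HAzw.
  eapply Rle_trans; [apply (opnorm_bound_matT A nA HnA)|].
  replace (L * nA ^ 2 * norm (vsub z w)) with (nA * (L * (nA * norm (vsub z w)))) by ring.
  apply Rmult_le_compat_l; auto. eapply Rle_trans; [apply HL|].
  apply Rmult_le_compat_l; auto.
Qed.

End Composite.

Lemma is_grad_small_step {n} (f : vec n -> R) G x h eps :
  is_grad f G x -> 0 < eps ->
  exists l, 0 < l <= 1 /\ f (vadd x (scale l h)) - f x <= l * (dot G h + eps * norm h).
Proof.
  intros Hf Heps. destruct (Hf eps Heps) as [del [Hdel H]].
  set (N := norm h). pose proof (norm_nonneg h) as HN. fold N in HN.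
  set (l := Rmin 1 (del / (N + 1))).
  assert (Hl0 : 0 < l) by (apply Rmin_glb_lt; [lra | apply Rdiv_lt_0_compat; lra]).
  assert (Hl1 : l <= 1) by apply Rmin_l.
  assert (Hl2 : l * (N + 1) <= del).
  { pose proof (Rmin_r 1 (del / (N + 1))). fold l in H0.
    apply Rmult_le_compat_r with (r := N + 1) in H0; [|lra].
    replace (del / (N + 1) * (N + 1)) with del in H0 by (field; lra); exact H0. }
  assert (Hk : norm (scale l h) < del) by (rewrite norm_scale, Rabs_right by lra; fold N; nra).
  specialize (H _ Hk). rewrite norm_scale, (Rabs_right l), dot_scale_r in H by lra.
  exists l; split; [lra|]. pose proof (Rle_abs (f (vadd x (scale l h)) - f x - l * dot G h)).
  fold N in H. nra.
Qed.

Lemma first_order_optimality {n} (S : vec n -> Prop) (f : vec n -> R) G x :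
  convex_set S -> is_grad f G x -> S x -> (forall y, S y -> f x <= f y) ->
  forall y, S y -> 0 <= dot G (vsub y x).
Proof.
  intros HS Hf Hx Hmin y Hy. set (h := vsub y x).
  destruct (Rle_or_lt 0 (dot G h)) as [|HD]; auto. exfalso.
  pose proof (norm_nonneg h).
  (* a small step along the descent direction [h] stays in [S] and decreases [f] *)
  set (eps := - dot G h / (2 * (norm h + 1))).
  assert (Heps : 0 < eps) by (apply Rdiv_lt_0_compat; lra).
  assert (Hepsn : eps * norm h <= - dot G h / 2).
  { unfold eps. apply Rmult_le_reg_r with (2 * (norm h + 1)); [lra|].
    field_simplify; nra. }
  destruct (is_grad_small_step f G x h eps Hf Heps) as [l [Hl Hdec]].
  pose proof (Hmin _ (HS x y l Hx Hy ltac:(lra))). fold h in H0. nra.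
Qed.

Section Growth.
Context {n m p : nat} (C : mat p n) (d : vec p) (g : vec m -> R) (Gg : vec m -> vec m)
  (sigma_g : R) (A : mat m n) (c : vec n) (xs : vec n).
Hypothesis Hsig : 0 < sigma_g.
Hypothesis Hsc : strongly_convex g Gg sigma_g.
Hypothesis Hxs : is_optimal C d (fobj g A c) xs.
Hypothesis Hfo : forall y, in_poly C d y -> 0 <= dot (fgrad Gg A c xs) (vsub y xs).

Let t := matvec A xs.
Let s := dot c xs.
Let f := fobj g A c.

Let f_opt : f xs = g t + s.
Proof. reflexivity. Qed.

Lemma first_order_affine y :
  in_poly C d y -> 0 <= dot (Gg t) (vsub (matvec A y) t) + (dot c y - s).
Proof.
  intro Hy. pose proof (Hfo y Hy) as H. unfold fgrad in H.
  rewrite dot_vadd_l, dot_matT, matvec_vsub, !dot_vsub_r in H.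
  unfold t, s; rewrite dot_vsub_r; lra.
Qed.

Lemma growth_matvec y :
  in_poly C d y -> sigma_g / 2 * norm (vsub (matvec A y) t) ^ 2 <= f y - f xs.
Proof.
  intro Hy. pose proof (first_order_affine y Hy). pose proof (Hsc (matvec A y) t).
  rewrite f_opt; unfold f, fobj; lra.
Qed.

Lemma linear_part_bound y :
  in_poly C d y ->
  Rabs (dot c y - s) <= f y - f xs + norm (Gg t) * norm (vsub (matvec A y) t).
Proof.
  intro Hy. pose proof (first_order_affine y Hy). pose proof (Hsc (matvec A y) t).
  pose proof (growth_matvec y Hy). pose proof (pow2_ge_0 (norm (vsub (matvec A y) t))).
  pose proof (cauchy_schwarz (Gg t) (vsub (matvec A y) t)).
  pose proof (Rle_abs (dot (Gg t) (vsub (matvec A y) t))).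
  assert (- dot (Gg t) (vsub (matvec A y) t) <= Rabs (dot (Gg t) (vsub (matvec A y) t)))
    by (rewrite <- Rabs_Ropp; apply Rle_abs).
  rewrite f_opt in *; apply Rabs_le; unfold f, fobj in *; nra.
Qed.

Lemma optimal_affine x : is_optimal C d f x -> veq (matvec A x) t /\ dot c x = s.
Proof.
  intros [Hx Hxo]. destruct Hxs as [Hxsp Hxso].
  assert (Hval : f x - f xs = 0).
  { pose proof (Hxo xs Hxsp). assert (f xs <= f x) by exact (Hxso x Hx). lra. }
  assert (Hr : norm (vsub (matvec A x) t) = 0).
  { pose proof (growth_matvec x Hx) as Hg. rewrite Hval in Hg.
    pose proof (norm_nonneg (vsub (matvec A x) t)).
    apply Rle_antisym; [|lra]. apply Rnot_lt_le; intro Hpos.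
    assert (0 < sigma_g / 2 * norm (vsub (matvec A x) t) ^ 2)
      by (apply Rmult_lt_0_compat; [lra | apply pow_lt; exact Hpos]).
    lra. }
  split.
  - intro i. pose proof (norm_eq0 _ Hr i). unfold vsub in *; lra.
  - pose proof (linear_part_bound x Hx) as He. rewrite Hval, Hr, Rmult_0_r, Rplus_0_l in He.
    pose proof (Rle_abs (dot c x - s)). pose proof (Rle_abs (- (dot c x - s))).
    rewrite Rabs_Ropp in *. lra.
Qed.

Lemma optimal_iff x :
  is_optimal C d f x <-> veq (matvec A x) t /\ dot c x = s /\ in_poly C d x.
Proof.
  split.
  - intro Hx. destruct (optimal_affine x Hx). repeat split; auto. apply Hx.
  - intros [Ht [Hs Hx]]. split; auto. intros y Hy.
    replace (f x) with (f xs); [apply Hxs; exact Hy|].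
    unfold f, fobj. rewrite Hs. f_equal. f_equal.
    symmetry; apply functional_extensionality; exact Ht.
Qed.

End Growth.

Lemma quadratic_growth_real (sigma theta M cg r e D N : R) :
  0 < sigma -> 0 < theta -> 0 < M -> 0 <= cg -> 0 <= r -> 0 <= N ->
  sigma / 2 * r ^ 2 <= D -> D <= M -> Rabs e <= D + cg * r ->
  N <= theta * sqrt (r ^ 2 + e ^ 2) ->
  D >= sigma / (theta ^ 2 * (1 + M * sigma + 2 * cg ^ 2)) / 2 * N ^ 2.
Proof.
  intros Hs Ht HM Hcg Hr HN Hgr HDM He HNb.
  set (Q := 1 + M * sigma + 2 * cg ^ 2).
  assert (HQ : 0 < Q) by (unfold Q; nra).
  assert (HD0 : 0 <= D) by nra.
  assert (Hr2 : r ^ 2 <= 2 * D / sigma).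
  { apply Rmult_le_reg_l with (sigma / 2); [lra|].
    replace (sigma / 2 * (2 * D / sigma)) with D by (field; lra); exact Hgr. }
  assert (He2 : e ^ 2 <= 2 * D ^ 2 + 2 * cg ^ 2 * r ^ 2).
  { pose proof (Rabs_pos e). pose proof (pow2_ge_0 (D - cg * r)).
    rewrite <- (pow2_abs e). nra. }
  (* [D^2 <= M D] is where the level [M] enters the constant *)
  assert (HsumQ : r ^ 2 + e ^ 2 <= 2 * Q / sigma * D).
  { assert (D ^ 2 <= M * D) by nra.
    assert (cg ^ 2 * r ^ 2 <= cg ^ 2 * (2 * D / sigma)) by (apply Rmult_le_compat_l; nra).
    replace (2 * Q / sigma * D) with
      (2 * D / sigma + 2 * (M * D) + 2 * (cg ^ 2 * (2 * D / sigma))) by (unfold Q; field; lra).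
    lra. }
  assert (HN2 : N ^ 2 <= theta ^ 2 * (2 * Q / sigma * D)).
  { assert (0 <= r ^ 2 + e ^ 2) by nra.
    apply Rle_trans with ((theta * sqrt (r ^ 2 + e ^ 2)) ^ 2).
    - apply pow_incr; auto.
    - rewrite Rpow_mult_distr, pow2_sqrt by auto.
      apply Rmult_le_compat_l; [nra | exact HsumQ]. }
  assert (Ht2 : 0 < theta ^ 2) by (apply pow_lt; lra).
  apply Rle_ge. fold Q.
  apply Rle_trans with (sigma / (theta ^ 2 * Q) / 2 * (theta ^ 2 * (2 * Q / sigma * D))).
  - apply Rmult_le_compat_l; auto.
    apply Rlt_le, Rdiv_lt_0_compat; [apply Rdiv_lt_0_compat; [lra | nra] | lra].
  - right; field; lra.
Qed.

Theorem theorem10 (n m p : nat) (C : mat p n) (d : vec p)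
  (g : vec m -> R) (Gg : vec m -> vec m) (sigma_g L_g : R)
  (A : mat m n) (c : vec n) (nA : R) (xs : vec n)
  (Hgrad : forall w, is_grad g (Gg w) w)
  (Hsig : 0 < sigma_g)
  (Hsc : strongly_convex g Gg sigma_g)
  (HL : lipschitz Gg L_g)
  (HA : exists i j, A i j <> 0)
  (HnA : is_opnorm A nA)
  (Hxs : is_optimal C d (fobj g A c) xs) :
  (exists Gf : vec n -> vec n,
      (forall x, is_grad (fobj g A c) (Gf x) x) /\ lipschitz Gf (L_g * nA ^ 2))
  /\
  exists (t : vec m) (s : R),
    (forall x, is_optimal C d (fobj g A c) x -> veq (matvec A x) t /\ dot c x = s) /\
    (forall (t' : vec m) (s' : R),
       (forall x, is_optimal C d (fobj g A c) x -> veq (matvec A x) t' /\ dot c x = s') ->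
       veq t' t /\ s' = s) /\
    (forall x, is_optimal C d (fobj g A c) x <->
       (veq (matvec A x) t /\ dot c x = s /\ in_poly C d x)) /\
    (forall theta, 0 < theta ->
       (forall x q, is_proj (is_optimal C d (fobj g A c)) x q ->
          norm (vsub x q) <= theta * sqrt ((norm (vsub (matvec A x) t)) ^ 2
                                          + (dot c x - s) ^ 2
                                          + (norm (vpos (vsub (matvec C x) d))) ^ 2)) ->
       forall M, 0 < M ->
       let c_g := norm (Gg t) in
       let kappa_f := sigma_g / (theta ^ 2 * (1 + M * sigma_g + 2 * c_g ^ 2)) in
       forall x, in_poly C d x -> fobj g A c x - fobj g A c xs <= M ->
       forall q, is_proj (is_optimal C d (fobj g A c)) x q ->
         fobj g A c x - fobj g A c xs >= kappa_f / 2 * (norm (vsub x q)) ^ 2).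
Proof.
  (* [A <> 0] only serves to make [m > 0], which forces [0 <= L_g] *)
  destruct HA as [i _].
  assert (Hgf : forall x, is_grad (fobj g A c) (fgrad Gg A c x) x)
    by (intro; apply is_grad_fobj with nA; auto).
  assert (Hfo : forall y, in_poly C d y -> 0 <= dot (fgrad Gg A c xs) (vsub y xs))
    by (apply (first_order_optimality (in_poly C d) (fobj g A c));
        [apply in_poly_convex | auto | apply Hxs | apply Hxs]).
  split.
  { exists (fgrad Gg A c); split; auto.
    apply lipschitz_fgrad; auto. apply (lipschitz_nonneg Gg L_g i HL). }
  exists (matvec A xs), (dot c xs); split; [|split; [|split]].
  - exact (optimal_affine C d g Gg sigma_g A c xs Hsig Hsc Hxs Hfo).
  - intros t' s' Ht'. destruct (Ht' xs Hxs) as [Ht Hs]. split; auto. intro; auto.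
  - exact (optimal_iff C d g Gg sigma_g A c xs Hsig Hsc Hxs Hfo).
  - intros theta Htheta Hhof M HM c_g kappa_f x Hx HxM q Hq.
    specialize (Hhof x q Hq). rewrite (vpos_feasible C d x Hx), pow_i, Rplus_0_r in Hhof
      by lia.
    subst c_g kappa_f.
    apply (quadratic_growth_real sigma_g theta M _ (norm (vsub (matvec A x) (matvec A xs)))
             (dot c x - dot c xs)); auto using norm_nonneg.
    + exact (growth_matvec C d g Gg sigma_g A c xs Hsc Hfo x Hx).
    + exact (linear_part_bound C d g Gg sigma_g A c xs Hsig Hsc Hfo x Hx).
Qed.
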